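(* Let $t\ge0$ and $b\in\mathcal B_{[2t]}$. Then $b^e\in\mathcal B_{[2t]}$, and: (i) $Q_1(b)=Q_1(b^e)$; (ii) $Q_1\big(Q_1(b)^e\big)=b+b^e$; (iii) $P\big(Q_1(b)^e\big)=Q_1(b)$; (iv) $P(b)=0=P(b^e)$; (v) $Q_1\big(Q_1(b\,x_{2t+1})^e\big)=Q_1(b\,x_{2t+1})$; (vi) $P\big(Q_1(b\,x_{2t+1})\big)=0$; (vii) $P\big(Q_1(b\,x_{2t+1})^e\big)=0$.
   Context: Over $\mathbb F_2$, $R=\Lambda(t_i:i\ge1)\otimes\Lambda(x_i:i\ge1)$ with basis the monomials $t_Ix_J$ ($I,J\subset\mathbb N_+$ finite, $t_I=\prod_{i\in I}t_i$, $x_J=\prod_{j\in J}x_j$, $t_It_K=0$ if $I\cap K\neq\emptyset$), with linear operators $Q_1(t_Ix_J)=\sum_{j\in J}t_jt_Ix_{J\setminus\{j\}}$ and $P(t_Ix_J)=\sum_{K\subseteq J,|K|=2}t_Kt_Ix_{J\setminus K}$. The exchange operation is the linear map $(-)^e:R\to R$, $(t_Ix_J)^e=t_Jx_I$ (interchanging $t_i$ and $x_i$). The sets $\mathcal B_{[n]}\subset R$ are defined inductively: $\mathcal B_{[0]}=\{1\}$; given $\mathcal B_{[2t]}$, $\mathcal B_{[2t+1]}=\{Q_1(b\,x_{2t+1}):b\in\mathcal B_{[2t]}\}\cup\{Q_1(b\,x_{2t+1})^e:b\in\mathcal B_{[2t]}\}$ and $\mathcal B_{[2t+2]}=\{Q_1(b\,x_{2t+1})\,x_{2t+2}:b\in\mathcal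 B_{[2t]}\}\cup\{Q_1(b\,x_{2t+1})^e\,t_{2t+2}:b\in\mathcal B_{[2t]}\}$ (products taken in $R$). *)

From mathcomp Require Import all_boot.
Set Implicit Arguments. Unset Strict Implicit. Unset Printing Implicit Defensive.

(* The F_2-algebra R = Lambda(t_i) (x) Lambda(x_i).
   A monomial t_I x_J is encoded by the pair (I, J) of finite sets of
   positive naturals, each represented canonically as a strictly increasing
   list.  An element of R is a finite list of monomials, read as their sum
   over F_2: the coefficient of a monomial m is the parity of its number of
   occurrences. *)

Definition mono := (seq nat * seq nat)%type.
Definition elt := seq mono.

Definition coef (f : elt) (m : mono) : bool := odd (count_mem m f).
Definition eqR (f g : elt) : Prop := forall m : mono, coef f m = coef g m.
Notation "f =R g" := (eqR f g) (at level 70, no associativity).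

Definition zeroR : elt := [::].
Definition oneR : elt := [:: ([::], [::])].
Definition addR (f g : elt) : elt := f ++ g.
Definition tv (i : nat) : elt := [:: ([:: i], [::])].
Definition xv (i : nat) : elt := [:: ([::], [:: i])].

Definition disj (I K : seq nat) : bool := all (fun i => i \notin K) I.

(* product of monomials: t_I x_J * t_K x_L (zero if the t's or x's overlap;
   no signs over F_2) *)
Definition mulm (a b : mono) : option mono :=
  if disj a.1 b.1 && disj a.2 b.2
  then Some (sort leq (a.1 ++ b.1), sort leq (a.2 ++ b.2)) else None.

Definition mulR (f g : elt) : elt := pmap id [seq mulm a b | a <- f, b <- g].

(* Q_1(t_I x_J) = sum_{j in J} t_j t_I x_{J \ j}  (t_j t_I = 0 if j in I) *)
Definition Q1m (m : mono) : elt :=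
  [seq (sort leq (j :: m.1), rem j m.2) | j <- [seq j <- m.2 | j \notin m.1]].
Definition Q1 (f : elt) : elt := flatten (map Q1m f).

Definition pairs2 (J : seq nat) : seq (seq nat) :=
  [seq [:: a; b] | a <- J, b <- [seq b <- J | a < b]].

Definition Pm (m : mono) : elt :=
  [seq (sort leq (K ++ m.1), [seq j <- m.2 | j \notin K])
  | K <- [seq K <- pairs2 m.2 | disj K m.1]].
Definition P (f : elt) : elt := flatten (map Pm f).

Definition ex (f : elt) : elt := [seq (m.2, m.1) | m <- f].

Fixpoint Beven (t : nat) : seq elt :=
  match t with
  | 0 => [:: oneR]
  | t'.+1 =>
      [seq mulR (Q1 (mulR b (xv t'.*2.+1))) (xv t'.*2.+2) | b <- Beven t'] ++
      [seq mulR (ex (Q1 (mulR b (xv t'.*2.+1)))) (tv t'.*2.+2) | b <- Beven t']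
  end.

Definition Bodd (t : nat) : seq elt :=
  [seq Q1 (mulR b (xv t.*2.+1)) | b <- Beven t] ++
  [seq ex (Q1 (mulR b (xv t.*2.+1))) | b <- Beven t].

Definition B (n : nat) : seq elt := if odd n then Bodd n./2 else Beven n./2.

Definition inB (n : nat) (f : elt) : Prop := exists2 g, g \in B n & f =R g.

From mathcomp Require Import all_boot.

Set Implicit Arguments.
Unset Strict Implicit.
Unset Printing Implicit Defensive.

(* If every index occurring in b is below k, the operators obey Leibniz-type
   rules with respect to the new variables x_k and t_k:
     Q1 (b x_k) = Q1(b) x_k + b t_k,      Q1 (b t_k) = Q1(b) t_k,
     P (b x_k) = P(b) x_k + Q1(b) t_k,    P (b t_k) = P(b) t_k,
   and (b x_k)^e = b^e t_k.  With these rules, the identities (i)-(iv) together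
   with Q1 Q1 b = 0 and P Q1 b = 0 pass from b in B_[2t] to c = Q1 (b x_{2t+1})
   in the form Q1 c = 0, Q1 c^e = c, P c = 0 = P c^e, and from such a c back to
   the two kinds of elements c x_{2t+2} and (c x_{2t+2})^e = c^e t_{2t+2} of
   B_[2t+2]; the theorem follows by induction on t.  Over F_2 equality is
   parity of coefficients, which every monomialwise-defined map respects; and
   on canonical monomials (sorted, indices below k) multiplying by x_k or t_k
   is appending k. *)

Lemma coef_cat f g m : coef (f ++ g) m = coef f m (+) coef g m.
Proof. by rewrite /coef count_cat oddD. Qed.

Lemma coef_cons a f m : coef (a :: f) m = (a == m) (+) coef f m.
Proof. by rewrite -cat1s coef_cat /coef /= addn0 oddb. Qed.

Lemma coef_flatten_map (h : mono -> elt) f m :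
  coef (flatten (map h f)) m = \big[addb/false]_(a <- f) coef (h a) m.
Proof. by elim: f => [|a f IH]; rewrite ?big_nil ?big_cons //= coef_cat IH. Qed.

Lemma big_addb_coef (F : mono -> bool) (f U : elt) : uniq U -> {subset f <= U} ->
  \big[addb/false]_(a <- f) F a = \big[addb/false]_(a <- U) (coef f a && F a).
Proof.
move=> uU; elim: f => [|x f IH] fU; first by rewrite big_nil big1.
have xU := fU x (mem_head x f).
have pick_x : \big[addb/false]_(a <- U) ((x == a) && F a) = F x.
  rewrite (bigD1_seq x) //= eqxx big1 ?addbF // => a ax.
  by rewrite eq_sym (negbTE ax).
rewrite big_cons IH => [|y yf]; last by apply: fU; rewrite inE yf orbT.
rewrite -{1}pick_x -big_split; apply: eq_bigr => a _.
by rewrite coef_cons; case: (x == a); case: (coef f a); case: (F a).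
Qed.

Lemma eqR_flatten_map (h : mono -> elt) f g :
  f =R g -> flatten (map h f) =R flatten (map h g).
Proof.
move=> fg m; rewrite !coef_flatten_map.
have uU := undup_uniq (f ++ g).
rewrite (@big_addb_coef _ f _ uU) => [|a af]; last by rewrite mem_undup mem_cat af.
rewrite (@big_addb_coef _ g _ uU) => [|a ag]; last by rewrite mem_undup mem_cat ag orbT.
by apply: eq_bigr => a _; rewrite fg.
Qed.

Lemma eqR_sym f g : f =R g -> g =R f.
Proof. by move=> fg m; rewrite fg. Qed.

Lemma perm_eqR f g : perm_eq f g -> f =R g.
Proof. by move/permP=> fg m; rewrite /coef fg. Qed.

Lemma eqR_map (h : mono -> mono) f g : f =R g -> map h f =R map h g.
Proof. by rewrite -(flatten_map1 h f) -(flatten_map1 h g); apply: eqR_flatten_map. Qed.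

Lemma eqR_Q1 f g : f =R g -> Q1 f =R Q1 g. Proof. exact: eqR_flatten_map. Qed.
Lemma eqR_P f g : f =R g -> P f =R P g. Proof. exact: eqR_flatten_map. Qed.
Lemma eqR_ex f g : f =R g -> ex f =R ex g. Proof. exact: eqR_map. Qed.

Lemma cat_selfR f : f ++ f =R zeroR.
Proof. by move=> m; rewrite coef_cat addbb. Qed.

Lemma Q1_cat f g : Q1 (f ++ g) = Q1 f ++ Q1 g.
Proof. by rewrite /Q1 map_cat flatten_cat. Qed.

Lemma P_cat f g : P (f ++ g) = P f ++ P g.
Proof. by rewrite /P map_cat flatten_cat. Qed.

Lemma ex_cat f g : ex (f ++ g) = ex f ++ ex g.
Proof. exact: map_cat. Qed.

Lemma exK : involutive ex.
Proof. by move=> f; rewrite /ex -map_comp map_id_in // => -[]. Qed.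

Lemma perm_flatten_map_cat (S : Type) (U : eqType) (A B : S -> seq U) (s : seq S) :
  perm_eq (flatten [seq A a ++ B a | a <- s]) (flatten (map A s) ++ flatten (map B s)).
Proof.
elim: s => //= a s IH; rewrite -!catA perm_cat2l.
by apply: perm_trans (perm_cat (perm_refl (B a)) IH) _; rewrite perm_catCA.
Qed.

Definition wf_mono k (m : mono) := [&& sorted ltn m.1, sorted ltn m.2,
  all (fun i => i < k) m.1 & all (fun i => i < k) m.2].
Definition wf_elt k (f : elt) := all (wf_mono k) f.

Definition xmul k (m : mono) : mono := (m.1, rcons m.2 k).
Definition tmul k (m : mono) : mono := (rcons m.1 k, m.2).

Lemma notin_all_lt k (s : seq nat) : all (fun i => i < k) s -> k \notin s.
Proof. by move=> sk; apply/negP => /(allP sk); rewrite ltnn. Qed.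

Lemma sort_ltn_sorted s : sorted ltn s -> sort leq s = s.
Proof. by rewrite ltn_sorted_uniq_leq => /andP[_ /(sorted_sort leq_trans)]. Qed.

Lemma perm_sort_leq (s1 s2 : seq nat) : perm_eq s1 s2 -> sort leq s1 = sort leq s2.
Proof. exact/perm_sortP/anti_leq/leq_trans/leq_total. Qed.

Lemma sorted_rcons_all (T : Type) (r : rel T) : transitive r ->
  forall s x, sorted r s -> all (r^~ x) s -> sorted r (rcons s x).
Proof.
move=> r_tr s x; rewrite !(sorted_pairwise r_tr) -cats1 pairwise_cat => -> sx /=.
by rewrite andbT; apply: sub_all sx => y /= ->.
Qed.

Lemma sort_rcons (s : seq nat) k :
  all (fun i => i < k) s -> sort leq (rcons s k) = rcons (sort leq s) k.
Proof.
move=> sk; rewrite -[RHS](sorted_sort leq_trans); last first.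
  apply: (sorted_rcons_all leq_trans) (sort_sorted leq_total s) _.
  by apply/allP => i; rewrite mem_sort => /(allP sk) /ltnW.
by apply: perm_sort_leq; rewrite perm_rcons perm_sym perm_rcons perm_cons perm_sort.
Qed.

Lemma disjs0 (I : seq nat) : disj I [::].
Proof. exact/allP. Qed.

Lemma disj_all_lt (I : seq nat) k : all (fun i => i < k) I -> disj I [:: k].
Proof. by apply: sub_all => i /ltn_eqF; rewrite inE => ->. Qed.

Lemma mulm_xv k m : wf_mono k m -> mulm m ([::], [:: k]) = Some (xmul k m).
Proof.
case: m => I J; rewrite /wf_mono /= => /and4P[sI sJ _ aJ].
by rewrite /mulm /= disjs0 disj_all_lt // cats0 cats1 sort_rcons // !sort_ltn_sorted.
Qed.

Lemma mulm_tv k m : wf_mono k m -> mulm m ([:: k], [::]) = Some (tmul k m).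
Proof.
case: m => I J; rewrite /wf_mono /= => /and4P[sI sJ aI _].
by rewrite /mulm /= disjs0 disj_all_lt // cats0 cats1 sort_rcons // !sort_ltn_sorted.
Qed.

Lemma mulR_xv k f : wf_elt k f -> mulR f (xv k) = map (xmul k) f.
Proof.
elim: f => //= m f IH /andP[wm wf].
by rewrite /mulR /= mulm_xv //= -IH.
Qed.

Lemma mulR_tv k f : wf_elt k f -> mulR f (tv k) = map (tmul k) f.
Proof.
elim: f => //= m f IH /andP[wm wf].
by rewrite /mulR /= mulm_tv //= -IH.
Qed.

Lemma all_lt_succ k (s : seq nat) : all (fun i => i < k) s -> all (fun i => i < k.+1) s.
Proof. by apply: sub_all => i /ltnW. Qed.

Lemma wf_elt_xmul k f : wf_elt k f -> wf_elt k.+1 (map (xmul k) f).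
Proof.
move=> wf; apply/allP => _ /mapP[[I J] /(allP wf) /and4P[sI sJ aI aJ] ->].
by rewrite /wf_mono /= sI (sorted_rcons_all ltn_trans) //= all_rcons ltnSn !all_lt_succ.
Qed.

Lemma wf_elt_tmul k f : wf_elt k f -> wf_elt k.+1 (map (tmul k) f).
Proof.
move=> wf; apply/allP => _ /mapP[[I J] /(allP wf) /and4P[sI sJ aI aJ] ->].
by rewrite /wf_mono /= sJ (sorted_rcons_all ltn_trans) //= all_rcons ltnSn !all_lt_succ.
Qed.

Lemma wf_elt_ex k f : wf_elt k f -> wf_elt k (ex f).
Proof.
move=> wf; apply/allP => _ /mapP[[I J] /(allP wf) /and4P[sI sJ aI aJ] ->].
by rewrite /wf_mono /= sI sJ aI aJ.
Qed.

Lemma wf_elt_Q1 k f : wf_elt k f -> wf_elt k (Q1 f).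
Proof.
move=> wf; apply/allP => y /flatten_mapP[[I J] /(allP wf) /and4P[sI sJ aI aJ]].
case/mapP=> j; rewrite mem_filter => /andP[jI jJ] ->.
rewrite /wf_mono /= ltn_sorted_uniq_leq sort_uniq /= jI (sorted_uniq ltn_trans ltnn sI).
rewrite (sort_sorted leq_total) (subseq_sorted ltn_trans (rem_subseq _ _) sJ) /=.
apply/andP; split; last by apply/allP => i /mem_rem /(allP aJ).
by apply/allP => i; rewrite mem_sort inE => /orP[/eqP->|/(allP aI)] //; apply: (allP aJ).
Qed.

Lemma ex_xmul k f : ex (map (xmul k) f) = map (tmul k) (ex f).
Proof. by rewrite /ex -!map_comp. Qed.

Lemma ex_tmul k f : ex (map (tmul k) f) = map (xmul k) (ex f).
Proof. by rewrite /ex -!map_comp. Qed.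

Lemma rem_rcons_notin (J : seq nat) k : k \notin J -> rem k (rcons J k) = J.
Proof.
elim: J => [|a J IH] /=; first by rewrite eqxx.
by rewrite inE negb_or => /andP[ka kJ]; rewrite eq_sym (negbTE ka) IH.
Qed.

Lemma rem_rcons_in (J : seq nat) j k : j \in J -> rem j (rcons J k) = rcons (rem j J) k.
Proof.
elim: J => [|a J IH] //=; rewrite inE.
by case: (eqVneq a j) => [<-|aj] //= jJ; rewrite IH.
Qed.

Lemma Q1m_xmul k m : wf_mono k m -> Q1m (xmul k m) = rcons (map (xmul k) (Q1m m)) (tmul k m).
Proof.
case: m => I J; rewrite /wf_mono /= => /and4P[sI sJ aI aJ].
rewrite /Q1m /xmul /tmul /= filter_rcons (notin_all_lt aI) map_rcons -map_comp.
congr rcons.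
  by apply/eq_in_map => j; rewrite mem_filter => /andP[_ jJ] /=; rewrite rem_rcons_in.
rewrite rem_rcons_notin ?(notin_all_lt aJ) // (@perm_sort_leq _ (rcons I k)).
  by rewrite sort_rcons // sort_ltn_sorted.
by rewrite perm_sym perm_rcons.
Qed.

Lemma Q1m_tmul k m : wf_mono k m -> Q1m (tmul k m) = map (tmul k) (Q1m m).
Proof.
case: m => I J; rewrite /wf_mono /= => /and4P[sI sJ aI aJ].
rewrite /Q1m /tmul /= -map_comp.
rewrite (@eq_in_filter _ _ (fun j => j \notin I)) => [|j jJ]; last first.
  by rewrite mem_rcons inE (ltn_eqF (allP aJ j jJ)).
apply/eq_in_map => j; rewrite mem_filter => /andP[_ jJ] /=.
by rewrite -rcons_cons sort_rcons //= (allP aJ j jJ).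
Qed.

Lemma Q1_xmul k f : wf_elt k f ->
  Q1 (map (xmul k) f) =R map (xmul k) (Q1 f) ++ map (tmul k) f.
Proof.
move=> wf; apply: perm_eqR; rewrite /Q1.
have -> : map Q1m (map (xmul k) f) = [seq map (xmul k) (Q1m m) ++ [:: tmul k m] | m <- f].
  by rewrite -map_comp; apply/eq_in_map => m mf /=; rewrite Q1m_xmul ?(allP wf) ?cats1.
rewrite map_flatten -map_comp -(flatten_map1 (tmul k)).
exact: perm_flatten_map_cat.
Qed.

Lemma Q1_tmul k f : wf_elt k f -> Q1 (map (tmul k) f) = map (tmul k) (Q1 f).
Proof.
move=> wf; rewrite /Q1 map_flatten -!map_comp; congr flatten.
by apply/eq_in_map => m mf /=; rewrite Q1m_tmul ?(allP wf).
Qed.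

Lemma mem_pairs2 K (J : seq nat) : K \in pairs2 J -> all (mem J) K.
Proof.
case/allpairsPdep=> a [b [aJ]]; rewrite mem_filter => /andP[_ bJ] ->.
by rewrite /= aJ bJ.
Qed.

Lemma pairs2_rcons (J : seq nat) k : all (fun i => i < k) J ->
  perm_eq (pairs2 (rcons J k)) (pairs2 J ++ [seq [:: a; k] | a <- J]).
Proof.
move=> aJ; rewrite /pairs2 -cats1 map_cat flatten_cat /=.
have -> : [seq b <- J ++ [:: k] | k < b] = [::].
  rewrite filter_cat /= ltnn (@eq_in_filter _ _ pred0) ?filter_pred0 // => b.
  by move/(allP aJ)=> bk /=; rewrite ltnNge ltnW.
have -> : [seq [seq [:: a; b] | b <- [seq b <- J ++ [:: k] | a < b]] | a <- J] =
          [seq [seq [:: a; b] | b <- [seq b <- J | a < b]] ++ [:: [:: a; k]] | a <- J].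
  by apply/eq_in_map => a aJ'; rewrite filter_cat /= (allP aJ a aJ') map_cat.
rewrite /= cats0 -(flatten_map1 (fun a => [:: a; k])).
exact: perm_flatten_map_cat.
Qed.

Lemma Pm_xmul k m : wf_mono k m ->
  perm_eq (Pm (xmul k m)) (map (xmul k) (Pm m) ++ map (tmul k) (Q1m m)).
Proof.
case: m => I J; rewrite /wf_mono /= => /and4P[sI sJ aI aJ].
have kK K : K \in pairs2 J -> k \notin K.
  by move/mem_pairs2=> KJ; apply/negP => /(allP KJ) /(allP aJ); rewrite ltnn.
rewrite /Pm /xmul /=.
apply: perm_trans (perm_map _ (perm_filter _ (pairs2_rcons aJ))) _.
rewrite filter_cat map_cat; apply: perm_cat.
  rewrite -map_comp; apply/permP => p; congr (count p _); apply/eq_in_map => K.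
  by rewrite mem_filter => /andP[_ /kK kK'] /=; rewrite filter_rcons kK'.
rewrite filter_map (@eq_filter _ _ (fun a => a \notin I)) => [|a]; last first.
  by rewrite /preim /= /disj /= (negbTE (notin_all_lt aI)) /= andbT.
rewrite /Q1m /= -!map_comp; apply/permP => p; congr (count p _).
apply/eq_in_map => a; rewrite mem_filter => /andP[aI' aJ'] /=.
have ak := allP aJ a aJ'; rewrite /tmul /=; congr pair.
  rewrite (@perm_sort_leq _ (rcons (a :: I) k)) ?sort_rcons //= ?ak //.
  by rewrite perm_cons perm_sym perm_rcons.
rewrite filter_rcons !inE eqxx orbT /= rem_filter ?(sorted_uniq ltn_trans ltnn) //.
by apply: eq_in_filter => j jJ /=; rewrite !inE (ltn_eqF (allP aJ j jJ)) orbF.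
Qed.

Lemma Pm_tmul k m : wf_mono k m -> Pm (tmul k m) = map (tmul k) (Pm m).
Proof.
case: m => I J; rewrite /wf_mono /= => /and4P[sI sJ aI aJ].
have KJk K : K \in pairs2 J -> all (fun i => i < k) K.
  by move/mem_pairs2=> KJ; apply/allP => i /(allP KJ) /(allP aJ).
rewrite /Pm /tmul /= -map_comp (@eq_in_filter _ _ (fun K => disj K I)) => [|K KJ].
  apply/eq_in_map => K; rewrite mem_filter => /andP[_ KJ] /=.
  by rewrite -rcons_cat sort_rcons // all_cat aI KJk.
apply: eq_in_all => i iK; rewrite mem_rcons inE.
by rewrite (ltn_eqF (allP (KJk K KJ) i iK)).
Qed.

Lemma P_xmul k f : wf_elt k f ->
  P (map (xmul k) f) =R map (xmul k) (P f) ++ map (tmul k) (Q1 f).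
Proof.
move=> wf; apply: perm_eqR; rewrite /P /Q1 !map_flatten -!map_comp.
apply: perm_trans (perm_flatten_map_cat _ _ _).
elim: f wf => //= m f IH /andP[wm wf].
by apply: perm_cat; [exact: Pm_xmul | exact: IH].
Qed.

Lemma P_tmul k f : wf_elt k f -> P (map (tmul k) f) = map (tmul k) (P f).
Proof.
move=> wf; rewrite /P map_flatten -!map_comp; congr flatten.
by apply/eq_in_map => m mf /=; rewrite Pm_tmul ?(allP wf).
Qed.

Ltac case_coefs := repeat match goal with |- context [coef ?f ?m] => case: (coef f m) end.

Record even_laws (b : elt) : Prop := EvenLaws {
  even_Q1_ex : Q1 b =R Q1 (ex b);
  even_Q1_ex_Q1 : Q1 (ex (Q1 b)) =R b ++ ex b;
  even_P_ex_Q1 : P (ex (Q1 b)) =R Q1 b;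
  even_P : P b =R zeroR;
  even_P_ex : P (ex b) =R zeroR;
  even_P_Q1 : P (Q1 b) =R zeroR;
  even_Q1_Q1 : Q1 (Q1 b) =R zeroR }.

Record odd_laws (c : elt) : Prop := OddLaws {
  odd_Q1 : Q1 c =R zeroR;
  odd_Q1_ex : Q1 (ex c) =R c;
  odd_P : P c =R zeroR;
  odd_P_ex : P (ex c) =R zeroR }.

Lemma even_laws1 : even_laws oneR.
Proof. by split=> //; apply: eqR_sym (cat_selfR oneR). Qed.

Lemma even_laws_ex b : even_laws b -> even_laws (ex b).
Proof.
case=> Q1e Q1eQ1 PeQ1 Pb Peb PQ1 Q1Q1.
have eQ1e : ex (Q1 (ex b)) =R ex (Q1 b) by apply/eqR_ex/eqR_sym.
split=> m; rewrite ?exK.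
- by rewrite Q1e.
- by rewrite (eqR_Q1 eQ1e) Q1eQ1 !coef_cat addbC.
- by rewrite (eqR_P eQ1e) PeQ1 Q1e.
- exact: Peb.
- exact: Pb.
- by rewrite -(eqR_P Q1e) PQ1.
- by rewrite -(eqR_Q1 Q1e) Q1Q1.
Qed.

Section OddLevel.
Variables (k : nat) (b : elt).
Hypotheses (wb : wf_elt k b) (lawsb : even_laws b).

Let c := Q1 (map (xmul k) b).

Let c_split : c =R map (xmul k) (Q1 b) ++ map (tmul k) b.
Proof. exact: Q1_xmul. Qed.

Let ex_c_split : ex c =R map (tmul k) (ex (Q1 b)) ++ map (xmul k) (ex b).
Proof. by rewrite -ex_xmul -ex_tmul -ex_cat; apply: eqR_ex c_split. Qed.

Lemma odd_laws_Q1_xmul : odd_laws c.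
Proof.
have wQ := wf_elt_Q1 wb; have wE := wf_elt_ex wb; have wEQ := wf_elt_ex wQ.
case: lawsb => Q1e Q1eQ1 PeQ1 Pb Peb PQ1 Q1Q1.
split=> m.
- rewrite (eqR_Q1 c_split) Q1_cat coef_cat (Q1_xmul wQ) (Q1_tmul wb) !coef_cat.
  by rewrite (eqR_map _ Q1Q1); case_coefs.
- rewrite (eqR_Q1 ex_c_split) Q1_cat coef_cat (Q1_tmul wEQ) (eqR_map _ Q1eQ1) map_cat.
  rewrite (Q1_xmul wE) !coef_cat (eqR_map _ (eqR_sym Q1e)) c_split coef_cat.
  by case_coefs.
- rewrite (eqR_P c_split) P_cat coef_cat (P_xmul wQ) (P_tmul wb) !coef_cat.
  by rewrite (eqR_map _ PQ1) (eqR_map _ Q1Q1) (eqR_map _ Pb); case_coefs.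
- rewrite (eqR_P ex_c_split) P_cat coef_cat (P_tmul wEQ) (P_xmul wE) !coef_cat.
  rewrite (eqR_map _ PeQ1) (eqR_map _ Peb) (eqR_map _ (eqR_sym Q1e)).
  by case_coefs.
Qed.

End OddLevel.

Lemma even_laws_xmul k c : wf_elt k c -> odd_laws c -> even_laws (map (xmul k) c).
Proof.
move=> wc [Q1c Q1ec Pc Pec]; have we := wf_elt_ex wc.
have Q1_B : Q1 (map (xmul k) c) =R map (tmul k) c.
  by move=> m; rewrite (Q1_xmul wc) coef_cat (eqR_map _ Q1c).
have ex_Q1_B : ex (Q1 (map (xmul k) c)) =R map (xmul k) (ex c).
  by rewrite -ex_tmul; apply: eqR_ex.
split=> m.
- by rewrite Q1_B ex_xmul (Q1_tmul we) (eqR_map _ Q1ec).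
- by rewrite (eqR_Q1 ex_Q1_B) (Q1_xmul we) !coef_cat (eqR_map _ Q1ec) ex_xmul.
- by rewrite (eqR_P ex_Q1_B) (P_xmul we) coef_cat (eqR_map _ Pec) (eqR_map _ Q1ec) Q1_B.
- by rewrite (P_xmul wc) coef_cat (eqR_map _ Pc) (eqR_map _ Q1c).
- by rewrite ex_xmul (P_tmul we) (eqR_map _ Pec).
- by rewrite (eqR_P Q1_B) (P_tmul wc) (eqR_map _ Pc).
- by rewrite (eqR_Q1 Q1_B) (Q1_tmul wc) (eqR_map _ Q1c).
Qed.

Lemma Beven_laws t b : b \in Beven t ->
  [/\ wf_elt t.*2.+1 b, ex b \in Beven t & even_laws b].
Proof.
elim: t b => [|t IH] b; first by rewrite inE => /eqP ->; split=> //; apply: even_laws1.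
have odd_step b0 : b0 \in Beven t ->
    [/\ mulR b0 (xv t.*2.+1) = map (xmul t.*2.+1) b0,
        wf_elt t.*2.+2 (Q1 (map (xmul t.*2.+1) b0))
      & odd_laws (Q1 (map (xmul t.*2.+1) b0))].
  case/IH=> wb0 _ laws0; split; first exact: mulR_xv.
    exact/wf_elt_Q1/wf_elt_xmul.
  exact: odd_laws_Q1_xmul.
rewrite doubleS /= !mem_cat => /orP[]/mapP[b0 b0t ->].
all: have [mx wc oc] := odd_step b0 b0t; have we := wf_elt_ex wc.
all: rewrite mx ?(mulR_xv wc) ?(mulR_tv we); split.
- exact: wf_elt_xmul.
- by apply/orP; right; apply/mapP; exists b0; rewrite // mx (mulR_tv we) ex_xmul.
- exact: even_laws_xmul.
- exact: wf_elt_tmul.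
- by apply/orP; left; apply/mapP; exists b0; rewrite // mx (mulR_xv wc) ex_tmul exK.
- by rewrite -ex_xmul; apply/even_laws_ex/even_laws_xmul.
Qed.

Theorem mainTheorem10 (t : nat) (b : elt) :
  b \in B t.*2 ->
  inB t.*2 (ex b) /\
  (* (i) *)   Q1 b =R Q1 (ex b) /\
  (* (ii) *)  Q1 (ex (Q1 b)) =R addR b (ex b) /\
  (* (iii) *) P (ex (Q1 b)) =R Q1 b /\
  (* (iv) *)  (P b =R zeroR /\ P (ex b) =R zeroR) /\
  (* (v) *)   Q1 (ex (Q1 (mulR b (xv t.*2.+1)))) =R Q1 (mulR b (xv t.*2.+1)) /\
  (* (vi) *)  P (Q1 (mulR b (xv t.*2.+1))) =R zeroR /\
  (* (vii) *) P (ex (Q1 (mulR b (xv t.*2.+1)))) =R zeroR.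
Proof.
rewrite /B odd_double doubleK => /Beven_laws[wb exb lawsb].
have [_ Q1ec Pc Pec] := odd_laws_Q1_xmul wb lawsb.
rewrite (mulR_xv wb); split; first by exists (ex b); rewrite // /B odd_double doubleK.
by case: lawsb => Q1e Q1eQ1 PeQ1 Pb Peb _ _; do !split.
Qed.
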